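(* (1) For every gauge function $f$ there is an increasing $g\in\omega^\omega$ such that $\mathcal{I}_g\subseteq\mathcal{N}^f$. (2) For every increasing $g\in\omega^\omega$ there is a gauge function $f$ such that $\mathcal{N}^f\subseteq\mathcal{I}_g$.
   Context: $2^\omega$ carries the metric $d(x,y)=2^{-\min\{n:x(n)\neq y(n)\}}$ for $x\neq y$ and $d(x,x)=0$. A gauge function is a nondecreasing $f\colon[0,\infty)\to[0,\infty)$ with $f(0)=0$, $\lim_{x\to0}f(x)=0$; $\mathcal{H}^f(A)=\lim_{\delta\to0}\inf\{\sum_nf(\operatorname{diam}C_n):A\subseteq\bigcup_nC_n,\ \operatorname{diam}C_n\le\delta\}$ and $\mathcal{N}^f=\{A\subseteq2^\omega:\mathcal{H}^f(A)=0\}$. For $\sigma\in(2^{<\omega})^\omega$, $(\operatorname{ht}\sigma)(n)=|\sigma(n)|$ and $[\sigma]_\infty=\{x\in2^\omega:\exists^\infty n\ \sigma(n)\subseteq x\}$; for $g\in\omega^\omega$, $\mathcal{J}_g=\{A\subseteq2^\omega:\exists\sigma\in(2^{<\omega})^\omega\,(\operatorname{ht}\sigma=g\wedge A\subseteq[\sigma]_\infty)\}$. For $f,g\in\omega^\omega$, $f\ll g$ iff for every $k$, $f(n^k)\le g(n)$ for all but finitely many $n$. For increasing $f\in\omega^\omega$, the Yorioka ideal is $\mathcal{I}_f=\bigcup_{g\gg f}\mathcal{J}_g$. *)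

From HB Require Import structures.
From mathcomp Require Import all_boot all_order all_algebra.
From mathcomp Require Import all_classical all_reals all_analysis.
Set Implicit Arguments. Unset Strict Implicit. Unset Printing Implicit Defensive.
Import Order.TTheory GRing.Theory Num.Theory.
Import numFieldNormedType.Exports.
Local Open Scope classical_set_scope.
Local Open Scope ring_scope.

Definition cantor := nat -> bool.

Definition cdist {R : realType} (x y : cantor) : R :=
  match pselect (exists n, x n != y n) with
  | left h => (2%:R ^- ex_minn h)
  | right _ => 0
  end.

(* diameter (sup of the distances; diam of the empty set is sup set0 = 0) *)
Definition cdiam {R : realType} (C : set cantor) : R :=
  sup [set cdist x y | x in C & y in C].

Definition gauge {R : realType} (f : R -> R) : Prop :=
  (forall x y : R, 0 <= x -> x <= y -> f x <= f y) /\
  (forall x : R, 0 <= x -> 0 <= f x) /\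
  f 0 = 0 /\
  f x @[x --> 0^'+] --> 0.

Definition hausdorff_delta {R : realType} (f : R -> R) (delta : R)
    (A : set cantor) : \bar R :=
  ereal_inf [set s | exists C : nat -> set cantor,
     [/\ A `<=` \bigcup_n C n,
         (forall n, cdiam (C n) <= delta) &
         s = (\sum_(0 <= n <oo) (f (cdiam (C n)))%:E)%E]].

Definition hausdorff {R : realType} (f : R -> R) (A : set cantor) : \bar R :=
  lim ((fun delta => hausdorff_delta f delta A) @ 0^'+).

Definition nullf {R : realType} (f : R -> R) (A : set cantor) : Prop :=
  hausdorff f A = 0%E.

Definition is_init (s : seq bool) (x : cantor) : Prop :=
  forall i, (i < size s)%N -> x i = nth false s i.

Definition inf_often_set (sigma : nat -> seq bool) : set cantor :=
  [set x | forall m, exists n, (m <= n)%N /\ is_init (sigma n) x].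

Definition J_ideal (g : nat -> nat) (A : set cantor) : Prop :=
  exists sigma : nat -> seq bool,
    (forall n, size (sigma n) = g n) /\ A `<=` inf_often_set sigma.

Definition llt (f g : nat -> nat) : Prop :=
  forall k, exists N, forall n, (N <= n)%N -> (f (n ^ k) <= g n)%N.

Definition incr (f : nat -> nat) : Prop := forall m n, (m < n)%N -> (f m < f n)%N.

Definition yorioka (f : nat -> nat) (A : set cantor) : Prop :=
  exists g, llt f g /\ J_ideal g A.

From HB Require Import structures.
From mathcomp Require Import all_boot all_order all_algebra.
From mathcomp Require Import all_classical all_reals all_analysis.
From mathcomp Require Import zify.
Import Order.TTheory GRing.Theory Num.Theory.
Local Open Scope classical_set_scope.
Local Open Scope ring_scope.

(* Both parts rest on the dictionary "a set of diameter <= 2^-L is contained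
   in a cylinder of length L" (agree_of_cdiam_le, cdiam_cyl).

   (1) Given a gauge f, pick thresholds t(n) with f(2^-L) <= 2^-n for
   L >= t(n) and let g grow faster than t and the identity.  If A is in
   J_h with h >> g, then h(n) >= g(n) eventually, so the tails of the
   cylinders witnessing A in J_h are arbitrarily fine covers whose f-weight
   is at most sum_k 2^-(k+M+1) = 2^-M; hence H^f(A) = 0 (J_ideal_null).

   (2) Given increasing g, set ghat(p) = g(p^p), so g << ghat, and let
   f(x) = 2^-s, where s = glevel(L) is the largest level with
   ghat(4^(s+1)) <= L and L = dyadic_scale(x) ~ -log2 x.  An f-null set A has,
   for each k, a cover of f-weight < 2^-k; such a cover has fewer than
   2^(s-k) sets of level s, so the sets of positive diameter can be coded
   injectively by numbers p <= 4^(s+1) (triple_code), whence each coded set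
   lies in a cylinder of length ghat(p).  J_ideal_of_coded_covers turns such
   codes into a witness that A is in J_ghat, i.e. in I_g. *)

Section Dyadic.
Context {R : realType}.

Lemma p2V_ge0 (n : nat) : 0 <= (2 ^- n : R).
Proof. by rewrite invr_ge0 exprn_ge0. Qed.

Lemma p2V_gt0 (n : nat) : 0 < (2 ^- n : R).
Proof. by rewrite invr_gt0 exprn_gt0. Qed.

Lemma p2V_le {m n : nat} : (m <= n)%N -> (2 ^- n : R) <= 2 ^- m.
Proof.
by move=> mn; rewrite lef_pV2 ?posrE ?exprn_gt0 // ler_eXn2l // ltr1n.
Qed.

Lemma p2V_lt {m n : nat} : (m < n)%N -> (2 ^- n : R) < 2 ^- m.
Proof.
by move=> mn; rewrite ltf_pV2 ?posrE ?exprn_gt0 // ltr_eXn2l // ltr1n.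
Qed.

Lemma p2V_small (e : R) : 0 < e ->
  exists M, forall M', (M <= M')%N -> (2 ^- M' : R) < e.
Proof.
move=> e0; exists (Num.Def.archi_bound e^-1) => M' /upper_nthrootP.
by rewrite -[in X in _ -> X](invrK e) ltf_pV2 ?posrE ?exprn_gt0 ?invr_gt0.
Qed.

Lemma nneseries_dyadic_le (u : nat -> R) (M : nat) :
  (forall k, 0 <= u k) -> (forall k, u k <= 2 ^- (k + M.+1)) ->
  (\sum_(0 <= k <oo) (u k)%:E <= (2 ^- M)%:E)%E.
Proof.
move=> u0 uM.
have geo := @cvg_geometric_eseries_half R 1 M.
apply: (le_trans (lee_nneseries
  (v := fun k => (1 / (2 ^ (k + M.+1))%:R)%:E) _ _)).
- by move=> k _ _; rewrite lee_fin.
- by move=> k _; rewrite lee_fin div1r natrX.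
by rewrite (cvg_lim _ geo) // div1r.
Qed.

End Dyadic.

Section CantorMetric.
Context {R : realType}.

Lemma cdist_le_of_agree (x y : cantor) (L : nat) :
  (forall i, (i < L)%N -> x i = y i) -> @cdist R x y <= 2 ^- L.
Proof.
move=> xy; rewrite /cdist; case: pselect => [h|_]; last exact: p2V_ge0.
case: ex_minnP => m /eqP xm _; apply: p2V_le.
by rewrite leqNgt; apply/negP => /xy.
Qed.

Lemma agree_of_cdist_le {x y : cantor} {L : nat} :
  @cdist R x y <= 2 ^- L -> forall i, (i < L)%N -> x i = y i.
Proof.
move=> dxy i iL; apply/eqP/negPn/negP => xi.
move: dxy; rewrite /cdist; case: pselect => [h|nh]; last by case: nh; exists i.
case: ex_minnP => m _ /(_ i xi) mi.
by rewrite leNgt (p2V_lt (leq_ltn_trans mi iL)).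
Qed.

Lemma cdist_le1 (x y : cantor) : @cdist R x y <= 1.
Proof. by rewrite -invr1 -(expr0 2); apply: cdist_le_of_agree. Qed.

Lemma cdist_xx (x : cantor) : @cdist R x x = 0.
Proof. by rewrite /cdist; case: pselect => // h; exfalso; case: h => i; rewrite eqxx. Qed.

Lemma cdiam_set0 (C : set cantor) : ~ (C !=set0) -> @cdiam R C = 0.
Proof.
move=> C0; rewrite /cdiam.
suff -> : [set cdist x y | x in C & y in C] = (@set0 R) by rewrite sup0.
by apply/seteqP; split => // r [x Cx _]; exfalso; apply: C0; exists x.
Qed.

Lemma cdiam_ub {C : set cantor} {x y : cantor} : C x -> C y -> @cdist R x y <= cdiam C.
Proof.
move=> Cx Cy; apply: sup_upper_bound; last by exists x => //; exists y.
split; first by exists (cdist x y); exists x => //; exists y.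
by exists 1 => _ [a _ [b _ <-]]; exact: cdist_le1.
Qed.

Lemma cdiam_ge0 (C : set cantor) : 0 <= @cdiam R C.
Proof.
have [[x Cx]|C0] := pselect (C !=set0); last by rewrite cdiam_set0.
by rewrite -(cdist_xx x); exact: cdiam_ub.
Qed.

Lemma cdiam_le (C : set cantor) (r : R) : 0 <= r ->
  (forall x y, C x -> C y -> cdist x y <= r) -> cdiam C <= r.
Proof.
move=> r0 Cr; have [[x Cx]|C0] := pselect (C !=set0); last by rewrite cdiam_set0.
apply: ge_sup; first by exists (cdist x x); exists x => //; exists x.
by move=> _ [a Ca [b Cb <-]]; exact: Cr.
Qed.

Lemma cdiam_le1 (C : set cantor) : @cdiam R C <= 1.
Proof. by apply: cdiam_le => // x y _ _; exact: cdist_le1. Qed.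

Lemma agree_of_cdiam_le {C : set cantor} {L : nat} {x y : cantor} :
  C x -> C y -> @cdiam R C <= 2 ^- L -> forall i, (i < L)%N -> x i = y i.
Proof.
by move=> Cx Cy CL; exact: agree_of_cdist_le (le_trans (cdiam_ub Cx Cy) CL).
Qed.

Definition cyl (s : seq bool) : set cantor := [set x | is_init s x].

Lemma cdiam_cyl (s : seq bool) : @cdiam R (cyl s) <= 2 ^- size s.
Proof.
apply: cdiam_le; first exact: p2V_ge0.
by move=> x y xs ys; apply: cdist_le_of_agree => i i_s; rewrite xs // ys.
Qed.

End CantorMetric.

Section HausdorffMeasure.
Context {R : realType}.
Implicit Types (f : R -> R) (A : set cantor).

Lemma hausdorff_delta_ge0 f (d : R) A : gauge f -> (0 <= hausdorff_delta f d A)%E.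
Proof.
move=> [_ [f0 _]]; apply: le_ereal_inf_tmp => _ [C [_ _ ->]].
by apply: nneseries_ge0 => n _ _; rewrite lee_fin f0 // cdiam_ge0.
Qed.

Lemma hausdorff_delta_le_cover f {d : R} {A} {C : nat -> set cantor} :
  A `<=` \bigcup_n C n -> (forall n, cdiam (C n) <= d) ->
  (hausdorff_delta f d A <= \sum_(0 <= n <oo) (f (cdiam (C n)))%:E)%E.
Proof. by move=> AC Cd; apply: ereal_inf_lbound; exists C. Qed.

Lemma nullf_of_delta_eq0 f A :
  (forall d : R, 0 < d -> hausdorff_delta f d A = 0%E) -> nullf f A.
Proof.
move=> H0; rewrite /nullf /hausdorff; apply: cvg_lim => //; apply: cvg_near_cst.
by near=> d; apply: H0; near: d; exact: nbhs_right_gt.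
Unshelve. all: by end_near.
Qed.

(* Conversely, an H^f-null set has countable covers of arbitrarily small
   f-weight: H^f_d(A) increases as d decreases, so all of them vanish. *)
Lemma null_small_cover f A : nullf f A -> forall e : R, 0 < e ->
  exists C : nat -> set cantor,
    A `<=` \bigcup_n C n /\ (\sum_(0 <= n <oo) (f (cdiam (C n)))%:E < e%:E)%E.
Proof.
move=> nA e e0; pose H d := hausdorff_delta f d A.
have H_anti : {in `]0, +oo[ &, {homo H : d d' / d <= d' >-> (d' <= d)%E}}.
  move=> d d' _ _ dd'; apply: ereal_inf_le_tmp => _ [C [AC Cd ->]].
  by exists C; split => // n; exact: le_trans (Cd n) dd'.
have := nA; rewrite /nullf /hausdorff.
rewrite (cvg_lim _ (nonincreasing_at_right_cvge (BInfty _ false) isT H_anti)) //.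
move=> supH0; have H1 : (H 1%R <= 0)%E.
  by rewrite -supH0; apply: ereal_sup_ubound; exists 1%R => //; rewrite /= in_itv /= ltr01.
have /ereal_inf_lt [_ [C [AC _ ->]] Ce] : (H 1%R < e%:E)%E.
  by apply: le_lt_trans H1 _; rewrite lte_fin.
by exists C.
Qed.

End HausdorffMeasure.

Section SmallGaugeOfSmallJ.
Context {R : realType}.

Lemma inf_often_tail_cover (sigma : nat -> seq bool) (M : nat) :
  inf_often_set sigma `<=` \bigcup_k cyl (sigma (k + M)%N).
Proof.
move=> x /(_ M) [n [Mn xn]]; exists (n - M)%N => //.
by rewrite /cyl /= subnK.
Qed.

(* The core of part (1): if the cylinder lengths h eventually dominate n
   and satisfy f(2^-h(n)) <= 2^-n, then every set in J_h is H^f-null: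
   the tails of the defining cylinders are arbitrarily fine covers of
   f-weight at most 2^-M. *)
Lemma J_ideal_null {f : R -> R} {h : nat -> nat} {A : set cantor} (N : nat) :
  gauge f ->
  (forall n, (N <= n)%N -> (n <= h n)%N /\ f (2 ^- h n) <= 2 ^- n) ->
  J_ideal h A -> nullf f A.
Proof.
move=> gf hN [sigma [size_sigma Asigma]].
apply: nullf_of_delta_eq0 => d d0; apply/eqP.
rewrite eq_le hausdorff_delta_ge0 // andbT; apply/lee_addgt0Pr => e e0.
have [M0 M0small] : exists M0, forall M, (M0 <= M)%N -> 2 ^- M < Num.min d e.
  by apply: p2V_small; rewrite lt_min d0 e0.
pose M := maxn N M0.
have /M0small : (M0 <= M)%N by rewrite leq_maxr.
rewrite lt_min => /andP [Md Me].
pose C k := cyl (sigma (k + M.+1)%N).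
have hC k : (N <= k + M.+1)%N by lia.
have diamC k : cdiam (C k) <= (2 ^- h (k + M.+1)%N : R).
  by rewrite -size_sigma; exact: cdiam_cyl.
have cover : A `<=` \bigcup_k C k.
  exact: subset_trans Asigma (inf_often_tail_cover sigma M.+1).
have fine k : cdiam (C k) <= d.
  apply: le_trans (diamC k) (ltW (le_lt_trans (p2V_le _) Md)).
  by apply: leq_trans (hN _ (hC k)).1; lia.
rewrite add0e; apply: le_trans (hausdorff_delta_le_cover f cover fine) _.
have weight_ge0 k : 0 <= f (cdiam (C k)) by rewrite gf.2.1 // cdiam_ge0.
have weight_le k : f (cdiam (C k)) <= 2 ^- (k + M.+1).
  apply: le_trans (hN _ (hC k)).2.
  by apply: gf.1 (diamC k); exact: cdiam_ge0.
apply: le_trans (nneseries_dyadic_le _ _ weight_ge0 weight_le) _.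
by rewrite lee_fin ltW.
Qed.

Lemma gauge_dyadic_small {f : R -> R} : gauge f -> forall n : nat,
  exists L, forall L', (L <= L')%N -> f (2 ^- L') <= 2 ^- n.
Proof.
move=> [_ [f0 [_ f_cvg]]] n.
move: f_cvg => /cvgrPdist_lt /(_ _ (p2V_gt0 n)) [d /= d0 fd].
have [M Msmall] := p2V_small _ d0; exists M => L' ML'.
have := fd (2 ^- L'); rewrite /ball_ /= sub0r normrN ger0_norm ?p2V_ge0 //.
move=> /(_ (Msmall _ ML') (p2V_gt0 _)).
by rewrite sub0r normrN ger0_norm ?f0 ?p2V_ge0 // => /ltW.
Qed.

(* Part (1): choosing g above the thresholds of gauge_dyadic_small gives
   I_g <= N^f. *)
Lemma yorioka_null (f : R -> R) : gauge f ->
  exists g : nat -> nat, incr g /\ forall A, yorioka g A -> nullf f A.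
Proof.
move=> gf; have [t tf] := choice (gauge_dyadic_small gf).
pose g n := (\sum_(i < n.+1) (t i).+1)%N.
have gE n : g n.+1 = (g n + (t n.+1).+1)%N by rewrite /g big_ord_recr.
have g_incr : incr g.
  by apply: (homo_ltn ltn_trans) => n; rewrite gE; lia.
have t_lt_g n : (t n < g n)%N by rewrite /g big_ord_recr /=; lia.
have n_le_g n : (n <= g n)%N by elim: n => [|n IH] //; rewrite gE; lia.
exists g; split => // A [h [g_ll_h AJ]].
have [N gh] := g_ll_h 1%N.
apply: (J_ideal_null N gf _ AJ) => n Nn.
have := gh n Nn; rewrite expn1 => ghn.
have := n_le_g n; have := t_lt_g n.
by split; [lia | apply: tf; lia].
Qed.

End SmallGaugeOfSmallJ.

Lemma injective_unbounded {phi : nat -> nat} : injective phi ->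
  forall m, exists k, (m <= phi k)%N.
Proof.
move=> phi_inj m; apply: contrapT => /forallNP phi_small.
have lt_m k : (phi k < m)%N by rewrite ltnNge; apply/negP/phi_small.
pose psi (i : 'I_m.+1) : 'I_m := Ordinal (lt_m i).
have psi_inj : injective psi by move=> i j [/phi_inj /val_inj].
by have := leq_card psi psi_inj; rewrite !card_ord ltnn.
Qed.

Section CodedCovers.
Context {R : realType}.

(* Then sigma(p) := the
   first h(p) bits of a point of the set coded by p witnesses A in J_h:
   a point of A lies in one set of each cover, and those infinitely many
   sets have pairwise distinct, hence unbounded, codes. *)
Lemma J_ideal_of_coded_covers (h : nat -> nat) (C : nat -> nat -> set cantor)
    (pos : nat -> nat -> nat) (A : set cantor) :
  (forall k, A `<=` \bigcup_n C k n) ->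
  (forall k n k' n', pos k n = pos k' n' -> k = k' /\ n = n') ->
  (forall k n, cdiam (C k n) <= (2 ^- h (pos k n) : R)) ->
  J_ideal h A.
Proof.
move=> cover pos_inj small.
pose coded p := [set y : cantor | exists k n, pos k n = p /\ C k n y].
pose sigma p := mkseq (xget (fun=> false) (coded p)) (h p).
exists sigma; split => [p|x Ax m]; first by rewrite size_mkseq.
have /choice [nk x_nk] : forall k, exists n, C k n x.
  by move=> k; have [n _ Cx] := cover k x Ax; exists n.
have nk_code_inj : injective (fun k => pos k (nk k)) by move=> k k' /pos_inj [].
have [k mk] := injective_unbounded nk_code_inj m.
exists (pos k (nk k)); split => // i; rewrite size_mkseq => ih.
have : coded (pos k (nk k)) (xget (fun=> false) (coded (pos k (nk k)))).
  by apply: xgetI; exists k, (nk k).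
move=> [k' [n' [/pos_inj [-> ->] Cy]]].
by rewrite nth_mkseq //; exact: agree_of_cdiam_le (x_nk k) Cy (small _ _) i ih.
Qed.

End CodedCovers.

(* The number of m < n satisfying b: used to enumerate the sets of a cover
   lying at a given level. *)
Definition rank (b : pred nat) (n : nat) : nat := \sum_(0 <= m < n) b m.

Lemma rank_lt (b : pred nat) (n n' : nat) :
  (n < n')%N -> b n -> (rank b n < rank b n')%N.
Proof.
move=> nn' bn; rewrite /rank (@big_cat_nat _ _ _ n.+1 0 n') //= big_nat_recr //=.
by rewrite bn; lia.
Qed.

Lemma rank_inj (b : pred nat) (n n' : nat) :
  b n -> b n' -> rank b n = rank b n' -> n = n'.
Proof.
move=> bn bn' r_eq; case: (ltngtP n n') => // [/rank_lt|/rank_lt] r_lt.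
- by have := r_lt b bn; rewrite r_eq ltnn.
- by have := r_lt b bn'; rewrite r_eq ltnn.
Qed.

Lemma rank_bound {R : realType} (a : nat -> R) (b : pred nat) (s k n : nat) :
  (forall m, 0 <= a m) -> (forall m, b m -> 2 ^- s <= a m) ->
  (\sum_(0 <= m <oo) (a m)%:E < (2 ^- k)%:E)%E -> b n ->
  ((rank b n).+1 * 2 ^ k < 2 ^ s)%N.
Proof.
move=> a0 b_heavy a_small bn.
have rankS : rank b n.+1 = (rank b n).+1 by rewrite /rank big_nat_recr //= bn addn1.
have count_le : (rank b n.+1)%:R * 2 ^- s <= \sum_(0 <= m < n.+1) a m.
  rewrite /rank natr_sum mulr_suml; apply: ler_sum => m _.
  by case: (boolP (b m)) => [/b_heavy|_] /=; rewrite ?mul1r ?mul0r.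
have partial_le : ((\sum_(0 <= m < n.+1) a m)%:E <= \sum_(0 <= m <oo) (a m)%:E)%E.
  by rewrite -sumEFin; apply: nneseries_lim_ge => m _ _; rewrite lee_fin.
have : (rank b n.+1)%:R * 2 ^- s < (2 ^- k : R).
  by rewrite -lte_fin; apply: le_lt_trans a_small; apply: le_trans partial_le.
rewrite rankS -(ltr_nat R) natrM !natrX.
by rewrite ltr_pdivrMr ?exprn_gt0 // mulrC ltr_pdivlMr ?exprn_gt0.
Qed.

Lemma rank_bound_levels (r k s : nat) :
  (r.+1 * 2 ^ k < 2 ^ s)%N -> (k < s)%N /\ (r < 2 ^ s)%N.
Proof.
move=> rks; have k_pos : (0 < 2 ^ k)%N by rewrite expn_gt0.
split; last by move: rks k_pos; set a := (2 ^ k)%N; set b := (2 ^ s)%N; nia.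
rewrite -(@ltn_exp2l 2) //; move: rks k_pos.
set a := (2 ^ k)%N; set b := (2 ^ s)%N; nia.
Qed.

Definition triple_code (s k r : nat) : nat := (4 ^ s + k * 2 ^ s + r)%N.

Lemma triple_code_bound {s k r : nat} : (k < s)%N -> (r < 2 ^ s)%N ->
  (2 * triple_code s k r <= 4 ^ s.+1)%N.
Proof.
move=> ks rs; rewrite /triple_code expnS -[4%N]/(2 * 2)%N expnMn.
have := ltn_expl s (isT : (1 < 2)%N); move: ks rs; set a := (2 ^ s)%N; nia.
Qed.

Lemma triple_code_lt (s k r s' k' r' : nat) : (k < s)%N -> (r < 2 ^ s)%N ->
  (s < s')%N -> (triple_code s k r < triple_code s' k' r')%N.
Proof.
move=> ks rs ss'.
have lt_pow : (triple_code s k r < 4 ^ s.+1)%N.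
  apply: leq_trans (triple_code_bound ks rs); rewrite mul2n -addnn -addn1 leq_add2l.
  by rewrite /triple_code -addnA (leq_trans _ (leq_addr _ _)) // expn_gt0.
apply: leq_trans lt_pow _; rewrite -(@leq_exp2l 4) // in ss'.
by apply: leq_trans ss' _; rewrite /triple_code -addnA leq_addr.
Qed.

Lemma triple_code_inj {s k r s' k' r' : nat} :
  (k < s)%N -> (r < 2 ^ s)%N -> (k' < s')%N -> (r' < 2 ^ s')%N ->
  triple_code s k r = triple_code s' k' r' -> [/\ s = s', k = k' & r = r'].
Proof.
move=> ks rs ks' rs' E.
have ss' : s = s'.
  case: (ltngtP s s') => // lt.
  - by have := triple_code_lt s k r s' k' r' ks rs lt; rewrite E ltnn.
  - by have := triple_code_lt s' k' r' s k r ks' rs' lt; rewrite E ltnn.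
subst s'; move: E; rewrite /triple_code -!addnA => /addnI E.
have digit x y : (y < 2 ^ s)%N -> ((x * 2 ^ s + y) %/ 2 ^ s)%N = x.
  by move=> ys; rewrite divnMDl ?expn_gt0 // divn_small // addn0.
have kk' : k = k' by rewrite -(digit k r rs) E digit.
by subst k'; split => //; move/addnI: E.
Qed.

(* The dyadic scale of x > 0: the least L with 2^-(L+1) < x, so that
   2^-(L+1) < x <= 2^-L when x <= 1. *)
Definition dyadic_scale {R : realType} (x : R) : nat :=
  match pselect (exists L : nat, 2 ^- L.+1 < x) with
  | left h => ex_minn h
  | right _ => 0%N
  end.

Section Scale.
Context {R : realType}.

Lemma dyadic_scale_spec {x : R} : 0 < x ->
  2 ^- (dyadic_scale x).+1 < x /\ (forall L, 2 ^- L.+1 < x -> (dyadic_scale x <= L)%N).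
Proof.
move=> x0; rewrite /dyadic_scale; case: pselect => [h|nh]; first by case: ex_minnP.
by have [M M_small] := p2V_small _ x0; case: nh; exists M; exact: M_small.
Qed.

Lemma dyadic_scale_le {x : R} : 0 < x -> x <= 1 -> x <= 2 ^- dyadic_scale x.
Proof.
move=> x0 x1; have [_ minimal] := dyadic_scale_spec x0.
case E: (dyadic_scale x) => [|L]; first by rewrite expr0 invr1.
by rewrite leNgt; apply/negP => /minimal; rewrite E ltnn.
Qed.

Lemma dyadic_scale_anti {x y : R} : 0 < x -> x <= y -> (dyadic_scale y <= dyadic_scale x)%N.
Proof.
move=> x0 xy; have [x_gt _] := dyadic_scale_spec x0.
have [_ minimal] := dyadic_scale_spec (lt_le_trans x0 xy).
exact/minimal/(lt_le_trans x_gt xy).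
Qed.

Lemma dyadic_scale_ge {x : R} {L : nat} : 0 < x -> x <= 2 ^- L -> (L <= dyadic_scale x)%N.
Proof.
move=> x0 xL; have [x_gt _] := dyadic_scale_spec x0.
rewrite leqNgt; apply/negP => lt_sL.
by have := le_lt_trans (p2V_le lt_sL) x_gt; rewrite ltNge xL.
Qed.

End Scale.

Section YoriokaGauge.
Context {R : realType}.
Variable g : nat -> nat.
Hypothesis g_incr : incr g.

Lemma g_mono (m n : nat) : (m <= n)%N -> (g m <= g n)%N.
Proof. by rewrite leq_eqVlt => /orP [/eqP ->|/g_incr /ltnW]. Qed.

Definition ghat (p : nat) : nat := g (p ^ p).

Lemma ghat_mono {p q : nat} : (p <= q)%N -> (ghat p <= ghat q)%N.
Proof.
move=> pq; apply: g_mono; case: p pq => [|p] pq.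
  by rewrite expn0 expn_gt0; case: q pq.
apply: (@leq_trans (q ^ p.+1)); first by rewrite leq_exp2r.
by rewrite leq_pexp2l // (leq_trans _ pq).
Qed.

Lemma llt_ghat : llt g ghat.
Proof.
move=> k; exists k.+1 => n kn; apply: g_mono.
by rewrite leq_pexp2l // ?(leq_trans _ kn) // ltnW.
Qed.

(* The level of a scale L: the largest s < L with ghat(4^(s+1)) <= L
   (0 if there is none).  A set of scale L and level s > 0 therefore lies in
   a cylinder of length ghat(p) for every code p <= 4^(s+1). *)
Definition glevel (L : nat) : nat :=
  \max_(i < L | (ghat (4 ^ i.+1) <= L)%N) (i : nat).

Lemma glevel_attain {L : nat} : (0 < glevel L)%N ->
  (glevel L < L)%N /\ (ghat (4 ^ (glevel L).+1) <= L)%N.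
Proof.
suff : (glevel L == 0)%N \/ ((glevel L < L)%N /\ (ghat (4 ^ (glevel L).+1) <= L)%N).
  by case => [/eqP ->|].
rewrite /glevel; apply: (big_ind (fun v =>
  (v == 0)%N \/ ((v < L)%N /\ (ghat (4 ^ v.+1) <= L)%N))) => [|x y|i]; first by left.
- by rewrite /maxn; case: ifP.
- by move=> Li; right; split.
Qed.

Lemma glevel_ge {L s : nat} : (s < L)%N -> (ghat (4 ^ s.+1) <= L)%N -> (s <= glevel L)%N.
Proof.
move=> sL ghat_le; rewrite /glevel.
exact: (@leq_bigmax_cond _ (fun i : 'I_L => (ghat (4 ^ i.+1) <= L)%N)
  (fun i => i : nat) (Ordinal sL)).
Qed.

Lemma glevel_mono {L L' : nat} : (L <= L')%N -> (glevel L <= glevel L')%N.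
Proof.
move=> LL'; have [->//|level_pos] := posnP (glevel L).
have [lt_L ghat_le] := glevel_attain level_pos.
by apply: glevel_ge; [exact: leq_trans lt_L LL'|exact: leq_trans ghat_le LL'].
Qed.

Definition yorioka_gauge (x : R) : R :=
  if x <= 0 then 0 else 2 ^- glevel (dyadic_scale x).

(* Values of the gauge; f(x) -> 0 since level(scale x) -> oo as x -> 0+. *)
Lemma yorioka_gauge_ge0 (x : R) : 0 <= yorioka_gauge x.
Proof. by rewrite /yorioka_gauge; case: ifP => // _; exact: p2V_ge0. Qed.

Lemma yorioka_gauge_pos {x : R} : 0 < x -> yorioka_gauge x = 2 ^- glevel (dyadic_scale x).
Proof. by move=> x0; rewrite /yorioka_gauge leNgt x0. Qed.

Lemma gauge_yorioka_gauge : gauge yorioka_gauge.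
Proof.
split; [|split; [|split]].
- move=> x y x0 xy; rewrite /yorioka_gauge.
  case: ifPn => [_|]; first by case: ifP => // _; exact: p2V_ge0.
  rewrite -ltNge => x_pos; rewrite ifF; last by rewrite leNgt (lt_le_trans x_pos xy).
  exact/p2V_le/glevel_mono/dyadic_scale_anti.
- by move=> x _; exact: yorioka_gauge_ge0.
- by rewrite /yorioka_gauge lexx.
- apply/cvgrPdist_lt => e e0.
  have [S S_small] := p2V_small _ e0.
  pose L0 := maxn (ghat (4 ^ S.+1)) S.+1.
  near=> x.
  have x0 : 0 < x by near: x; exact: nbhs_right_gt.
  have /(dyadic_scale_ge x0) L0_le : x <= 2 ^- L0 by near: x; apply: nbhs_right_le; exact: p2V_gt0.
  rewrite sub0r normrN ger0_norm ?yorioka_gauge_ge0 // yorioka_gauge_pos //.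
  apply/S_small/glevel_ge; apply: leq_trans L0_le.
  + by rewrite leq_maxr.
  + by rewrite leq_maxl.
Unshelve. all: by end_near.
Qed.

End YoriokaGauge.

(* For each k take a cover
   Cv k of f-weight < 2^-k; code a set of positive diameter D by
   2 * triple_code (level, k, rank within its level) and a set of diameter 0
   by an odd number.  The codes are injective and the coded set has diameter
   at most 2^-ghat(code), so J_ideal_of_coded_covers applies with h = ghat. *)
Lemma null_yorioka {R : realType} (g : nat -> nat) (A : set cantor) : incr g ->
  nullf (yorioka_gauge g : R -> R) A -> yorioka g A.
Proof.
move=> g_incr nA.
have /choice [Cv Cv_spec] : forall k, exists C : nat -> set cantor,
    A `<=` \bigcup_n C n /\
    (\sum_(0 <= n <oo) (yorioka_gauge g (cdiam (C n)))%:E < (2 ^- k : R)%:E)%E.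
  by move=> k; exact: null_small_cover nA _ (p2V_gt0 k).
pose D k n : R := cdiam (Cv k n).
pose lv k n := glevel g (dyadic_scale (D k n)).
pose at_level k s m := (0 < D k m) && (lv k m == s).
pose r k n := rank (at_level k (lv k n)) n.
pose pos k n := if 0 < D k n then (2 * triple_code (lv k n) k (r k n))%N
  else (2 * pickle (k, n)).+1.
have levels k n : 0 < D k n -> (k < lv k n)%N /\ (r k n < 2 ^ lv k n)%N.
  move=> Dp; apply: rank_bound_levels.
  apply: (@rank_bound R (fun m => yorioka_gauge g (D k m)) (at_level k (lv k n))
    (lv k n) k n _ _ (Cv_spec k).2).
  - by move=> m; exact: yorioka_gauge_ge0.
  - by move=> m /andP [Dm /eqP <-]; rewrite yorioka_gauge_pos.
  - by rewrite /at_level Dp eqxx.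
have pos_inj k n k' n' : pos k n = pos k' n' -> k = k' /\ n = n'.
  rewrite /pos; case: ifPn => Dp; case: ifPn => Dp' E; try lia.
    have [ks rs] := levels k n Dp; have [ks' rs'] := levels k' n' Dp'.
    have /(triple_code_inj ks rs ks' rs') [lv_eq kk' r_eq] :
      triple_code (lv k n) k (r k n) = triple_code (lv k' n') k' (r k' n') by lia.
    subst k'; split => //; rewrite /r -lv_eq in r_eq.
    by apply: rank_inj r_eq; rewrite /at_level ?Dp ?Dp' ?lv_eq eqxx.
  have : pickle (k, n) = pickle (k', n') by lia.
  by move/(pcan_inj pickleK) => [-> ->].
have small k n : D k n <= 2 ^- ghat g (pos k n).
  rewrite /pos; case: ifPn => [Dp|]; last first.
    by rewrite -leNgt => D0; exact: le_trans D0 (p2V_ge0 _).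
  have [ks rs] := levels k n Dp.
  apply: le_trans (dyadic_scale_le Dp (cdiam_le1 _)) (p2V_le _).
  apply: leq_trans (ghat_mono _ g_incr (triple_code_bound ks rs)) (glevel_attain _ _).2.
  exact: leq_ltn_trans (leq0n k) ks.
exists (ghat g); split; first exact: llt_ghat.
exact: J_ideal_of_coded_covers (fun k => (Cv_spec k).1) pos_inj small.
Qed.

Theorem corollary3p6 (R : realType) :
  (forall f : R -> R, gauge f ->
     exists g : nat -> nat, incr g /\
       forall A : set cantor, yorioka g A -> nullf f A) /\
  (forall g : nat -> nat, incr g ->
     exists f : R -> R, gauge f /\
       forall A : set cantor, nullf f A -> yorioka g A).
Proof.
split; first exact: yorioka_null.
move=> g g_incr; exists (yorioka_gauge g); split; first exact: gauge_yorioka_gauge.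
by move=> A; exact: null_yorioka.
Qed.
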